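(* Let $H, G_1,\dots,G_r$ be finite simple graphs and $q\in\{1,\dots,r\}$ a positive integer. Suppose that $\widehat{H}\otimes\mathcal{C}_q\le\bigoplus_{d=1}^r\widehat{G_d}\otimes\mathcal{C}_d$. Then $\widehat{H}\otimes\mathcal{C}_q\le\bigoplus_{d=q}^r\widehat{G_d}\otimes\mathcal{C}_d$.
   Context: A noncommutative graph is a subspace $S\subseteq B(\mathcal{H})$ of operators on a finite-dimensional complex Hilbert space $\mathcal{H}$ with $I\in S$ and $S^*=S$. For noncommutative graphs $T\subseteq B(\mathcal{K})$ and $S\subseteq B(\mathcal{H})$, a cohomomorphism from $T$ to $S$ is a finite family of linear maps $E_i:\mathcal{K}\to\mathcal{H}$ ($i\in I$) with $\sum_i E_i^*E_i=I$ and $E_i^*SE_j\subseteq T$ for all $i,j\in I$; we write $T\le S$ if one exists. Tensor product: $S\otimes T=\operatorname{span}\{A\otimes B: A\in S, B\in T\}$; direct sum: $S\oplus T=\{A\oplus B:A\in S,B\in T\}$. For a finite simple graph $G$ (write $x\simeq x'$ if $x=x'$ or $x,x'$ adjacent), $\widehat{G}=\operatorname{span}\{|x\rangle\langle x'|: x,x'\in V(G), x\simeq x'\}\subseteq B(\mathbb{C}^{V(G)})$. For $d\ge1$, $\mathcal{C}_d=\mathbb{C}I\subseteq B(\mathbb{C}^d)$ (confusability graph of the noiseless $d$-dimensional quantum channel). If $V(G_d)$ is empty, the corresponding summand is zero-dimensional. *)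

From HB Require Import structures.
From mathcomp Require Import all_boot all_order all_algebra.
From mathcomp Require Import reals.
From mathcomp Require Import complex mxtens.
Set Implicit Arguments. Unset Strict Implicit. Unset Printing Implicit Defensive.
Import Order.TTheory GRing.Theory Num.Theory.
Local Open Scope ring_scope.

Section NCGraphs.
Variable R : realType.
Local Notation C := (R[i]).

Definition opset (n : nat) := 'M[C]_n -> Prop.

Definition adj h k (E : 'M[C]_(h, k)) : 'M[C]_(k, h) := (map_mx (@conjc R) E)^T.

Definition cohom_le k h (T : opset k) (S : opset h) : Prop :=
  exists (N : nat) (E : 'I_N -> 'M[C]_(h, k)),
    \sum_(i < N) adj (E i) *m E i = 1%:M /\
    forall (i j : 'I_N) (A : 'M[C]_h), S A -> T (adj (E i) *m A *m E j).

Definition graph_simple n (e : rel 'I_n) : Prop :=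
  irreflexive e /\ symmetric e.

Definition ghat n (e : rel 'I_n) : opset n := fun X =>
  exists c : 'I_n -> 'I_n -> C,
    X = \sum_(x < n) \sum_(x' < n | (x == x') || e x x') c x x' *: delta_mx x x'.

Definition ncC d : opset d := fun X => exists a : C, X = a%:M.

Definition ntens m p (S : opset m) (T : opset p) : opset (m * p) := fun X =>
  exists (N : nat) (c : 'I_N -> C) (A : 'I_N -> 'M[C]_m) (B : 'I_N -> 'M[C]_p),
    (forall i, S (A i) /\ T (B i)) /\ X = \sum_(i < N) c i *: (A i *t B i).

Definition ndsum k (p : 'I_k -> nat) (S : forall i, opset (p i))
  : opset (\sum_(i < k) p i) := fun X =>
  exists B : forall i, 'M[C]_(p i), (forall i, S i (B i)) /\ X = mxdiag B.

End NCGraphs.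

Arguments adj R {h k}.
Arguments cohom_le R {k h}.
Arguments ghat R {n}.
Arguments ncC R d _ : clear implicits.
Arguments ntens R {m p}.
Arguments ndsum R {k p}.

From Pilot Require Import Defs.
From HB Require Import structures.
From mathcomp Require Import all_boot all_order all_algebra.
From mathcomp Require Import reals.
From mathcomp Require Import complex mxtens.
From mathcomp Require Import ring.
Set Implicit Arguments. Unset Strict Implicit. Unset Printing Implicit Defensive.
Import Order.TTheory GRing.Theory Num.Theory.
Local Open Scope ring_scope.

(* Split each map E_a of the cohomomorphism into its blocks F_{a,d} for the summands
   G_d (x) C_d.  When d < q the block vanishes: putting delta_xx (x) I_d into
   summand d gives F^* (delta_xx (x) I_d) F = M (x) I_q, an operator that factors
   through C^d and so has rank at most d < q, whereas M (x) I_q has rank at least q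
   unless M = 0.  Hence every (e_x (x) I_d) F is zero, and so is F.  Dropping these
   zero blocks leaves a cohomomorphism into the sum over d >= q. *)

Lemma scalar_tensmx1 (K : comPzRingType) m n (a : K) :
  (a%:M : 'M[K]_m) *t (1%:M : 'M_n) = a%:M.
Proof.
apply/matrixP=> u v.
case: (mxtens_indexP u) => u1 u2; case: (mxtens_indexP v) => v1 v2.
rewrite tensmxE !mxE (can_eq (@mxtens_indexK m n)) xpair_eqE.
by case: eqP; case: eqP; rewrite ?mulr1 ?mulr0 ?mul0r.
Qed.

Lemma tensmx_suml (K : comPzRingType) m n p q (I : finType)
    (A : I -> 'M[K]_(m, n)) (B : 'M[K]_(p, q)) :
  (\sum_i A i) *t B = \sum_i (A i *t B).
Proof.
apply/matrixP=> u v; rewrite !mxE !summxE mulr_suml.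
by apply: eq_bigr => i _; rewrite !mxE.
Qed.

Lemma mxrank_tensmx1 (K : fieldType) m n q (M : 'M[K]_(m, n)) :
  M != 0 -> (q <= \rank (M *t (1%:M : 'M_q)))%N.
Proof.
move=> nzM; have /existsP[h /existsP[h' nzMhh']] : [exists h, exists h', M h h' != 0].
  apply: contraNT nzM => /existsPn M0; apply/eqP/matrixP=> i j.
  by move/existsPn: (M0 i) => /(_ j)/negPn/eqP; rewrite mxE.
pose P := (delta_mx 0 h : 'M[K]_(1, m)) *t (1%:M : 'M_q).
pose Q := (delta_mx h' 0 : 'M[K]_(n, 1)) *t (1%:M : 'M_q).
have PMQ : P *m (M *t 1%:M) *m Q = (M h h')%:M.
  rewrite !tensmx_mul !mulmx1 -rowE -colE -scalar_tensmx1; congr (_ *t _).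
  by rewrite [LHS]mx11_scalar !mxE.
have rank_q : \rank ((M h h')%:M : 'M[K]_(1 * q)) = q.
  by rewrite mxrank_unit ?mul1n // -scalemx1 unitmxZ ?unitmx1 ?unitfE.
rewrite -[X in (X <= _)%N]rank_q -PMQ.
exact: leq_trans (mxrankM_maxl _ _) (mxrankM_maxr _ _).
Qed.

Section Adjoint.
Variable R : realType.
Local Notation C := R[i].
Local Notation adj := (Defs.adj R).

Lemma adjE h k (A : 'M[C]_(h, k)) i j : adj A i j = (A j i)^*.
Proof. by rewrite !mxE. Qed.

Lemma adjM m n p (A : 'M[C]_(m, n)) (B : 'M[C]_(n, p)) : adj (A *m B) = adj B *m adj A.
Proof. by rewrite /Defs.adj map_mxM trmx_mul. Qed.

Lemma adj0 m n : adj (0 : 'M[C]_(m, n)) = 0.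
Proof. by apply/matrixP=> i j; rewrite adjE !mxE rmorph0. Qed.

Lemma adj1 n : adj (1%:M : 'M[C]_n) = 1%:M.
Proof. by apply/matrixP=> i j; rewrite adjE !mxE rmorph_nat eq_sym. Qed.

Lemma adj_delta m n (i : 'I_m) (j : 'I_n) : adj (delta_mx i j) = delta_mx j i.
Proof. by apply/matrixP=> a b; rewrite adjE !mxE rmorph_nat andbC. Qed.

Lemma adj_tens m n p q (A : 'M[C]_(m, n)) (B : 'M[C]_(p, q)) :
  adj (A *t B) = adj A *t adj B.
Proof. by apply/matrixP=> a b; rewrite adjE !mxE rmorphM. Qed.

Lemma adj_mxcol k (p_ : 'I_k -> nat) m (F : forall i, 'M[C]_(p_ i, m)) :
  adj (\mxcol_i F i) = \mxrow_i adj (F i).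
Proof. by apply/matrixP=> a b; rewrite !mxE. Qed.

Lemma adj_mulmx_self_eq0 m n (Y : 'M[C]_(m, n)) : adj Y *m Y = 0 -> Y = 0.
Proof.
move=> YY0; apply/matrixP=> a c; rewrite mxE.
have /= := congr1 (fun M : 'M[C]_n => M c c) YY0; rewrite !mxE => sum0.
have ge0 i : predT i -> 0 <= adj Y c i * Y i c by rewrite adjE mulrC mulcJ_ge0.
move: (psumr_eq0P ge0 sum0 (i := a) isT); rewrite adjE mulrC => /eqP.
by rewrite mulf_eq0 conjc_eq0 orbb => /eqP.
Qed.

Lemma adj_mulmx_tens1_eq0 m n q (Y : 'M[C]_(m, n * q)) (M : 'M[C]_n) :
  (m < q)%N -> adj Y *m Y = M *t 1%:M -> Y = 0.
Proof.
move=> lt_mq YY; apply: adj_mulmx_self_eq0; rewrite YY.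
suff -> : M = 0 by rewrite tens0mx.
apply: contraTeq lt_mq => /(mxrank_tensmx1 q); rewrite -YY -leqNgt => le_q.
exact: leq_trans le_q (leq_trans (mxrankM_maxr _ _) (rank_leq_row _)).
Qed.

Lemma compressions_tens1_eq0 n d q nH (F : 'M[C]_(n * d, nH * q)) :
  (d < q)%N ->
  (forall x : 'I_n, exists M : 'M[C]_nH,
     adj F *m (delta_mx x x *t (1%:M : 'M_d)) *m F = M *t 1%:M) ->
  F = 0.
Proof.
move=> lt_dq compF.
pose D (x : 'I_n) := (delta_mx 0 x : 'M[C]_(1, n)) *t (1%:M : 'M_d).
have DD x : adj (D x) *m D x = delta_mx x x *t 1%:M.
  by rewrite adj_tens adj_delta adj1 tensmx_mul mul_delta_mx mulmx1.
have DF0 x : D x *m F = 0.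
  have [M FF] := compF x; apply: (adj_mulmx_tens1_eq0 (M := M)); first by rewrite mul1n.
  by rewrite adjM mulmxA -[adj F *m _ *m _]mulmxA DD.
have sumDD : \sum_x adj (D x) *m D x = 1%:M.
  rewrite (eq_bigr _ (fun x _ => DD x)) -tensmx_suml -[RHS](scalar_tensmx1 n d).
  by congr (_ *t _); rewrite (scalar_mx_sum_delta n 1); under [RHS]eq_bigr do rewrite scale1r.
rewrite -[F]mul1mx -sumDD mulmx_suml big1 // => x _.
by rewrite -mulmxA DF0 mulmx0.
Qed.

End Adjoint.

Section OperatorSystems.
Variable R : realType.
Local Notation C := R[i].
Local Notation adj := (Defs.adj R).

Definition cohomomorphism k h N (E : 'I_N -> 'M[C]_(h, k))
    (T : opset R k) (S : opset R h) : Prop :=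
  \sum_(i < N) adj (E i) *m E i = 1%:M /\
  forall (i j : 'I_N) (A : 'M[C]_h), S A -> T (adj (E i) *m A *m E j).

Lemma ntens0 m p (S : opset R m) (T : opset R p) : ntens R S T 0.
Proof.
exists 0%N, (fun _ => 0), (fun _ => 0), (fun _ => 0).
by split=> [[]|]; rewrite ?big_ord0.
Qed.

Lemma ntens_ncC_tens1 m q (S : opset R m) X :
  ntens R S (ncC R q) X -> exists M : 'M[C]_m, X = M *t 1%:M.
Proof.
case=> N [c [A [B [SAB ->]]]].
have scalB i : exists a, B i == a%:M by have [_ [a ->]] := SAB i; exists a.
pose a i := xchoose (scalB i).
exists (\sum_(i < N) (c i * a i) *: A i).
apply/matrixP=> u v; rewrite !mxE !summxE mulr_suml; apply: eq_bigr => i _.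
by rewrite !mxE (eqP (xchooseP (scalB i))) !mxE -mulr_natr /a; ring.
Qed.

Lemma ghat_delta n (e : rel 'I_n) x : ghat R e (delta_mx x x).
Proof.
exists (fun u v => ((u == x) && (v == x))%:R).
rewrite [RHS](bigD1 x) //= [X in X + _](bigD1 x) ?eqxx //= scale1r.
rewrite big1 ?addr0 => [|v /andP[_ /negbTE->]]; last by rewrite scale0r.
by rewrite big1 ?addr0 // => u /negbTE ux; rewrite big1 // => v _; rewrite ux scale0r.
Qed.

Lemma ntens_delta n (e : rel 'I_n) d (x : 'I_n) :
  ntens R (ghat R e) (ncC R d) (delta_mx x x *t 1%:M).
Proof.
exists 1%N, (fun _ => 1), (fun _ => delta_mx x x), (fun _ => 1%:M); split.
  by move=> _; split; [exact: ghat_delta | exists 1].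
by rewrite big_ord1 scale1r.
Qed.

Section BlockSums.
Variables (k : nat) (p : 'I_k -> nat).
Local Notation sp := (\sum_i p i)%N.

Lemma mulmx_adj_mxcol m (F G : forall i, 'M[C]_(p i, m)) :
  adj (\mxcol_i F i) *m \mxcol_i G i = \sum_i adj (F i) *m G i.
Proof. by rewrite adj_mxcol mul_mxrow_mxcol. Qed.

Lemma mulmx_adj_submxcol m (E1 E2 : 'M[C]_(sp, m)) :
  adj E1 *m E2 = \sum_i adj (submxcol E1 i) *m submxcol E2 i.
Proof. by rewrite -mulmx_adj_mxcol !submxcolK. Qed.

Lemma mulmx_adj_mxdiag m (E1 E2 : 'M[C]_(sp, m)) (B : forall i, 'M[C]_(p i)) :
  adj E1 *m mxdiag B *m E2 = \sum_i adj (submxcol E1 i) *m B i *m submxcol E2 i.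
Proof.
rewrite -{1}(submxcolK E1) -{1}(submxcolK E2) adj_mxcol mul_mxrow_mxdiag.
by rewrite mul_mxrow_mxcol.
Qed.

End BlockSums.

Section Subfamily.
Variables (k : nat) (p : 'I_k -> nat) (k' : nat) (s : 'I_k' -> 'I_k).
Local Notation sp := (\sum_i p i)%N.
Hypothesis s_inj : injective s.

Lemma sumr_codom (V : nmodType) (g : 'I_k -> V) :
  (forall i, i \notin codom s -> g i = 0) -> \sum_j g (s j) = \sum_i g i.
Proof.
move=> g0; rewrite [RHS](bigID (mem (codom s))) /= [X in _ + X]big1 ?addr0 //.
rewrite -big_uniq ?(map_inj_uniq s_inj) ?enum_uniq //.
by rewrite big_image.
Qed.

(* [conform_mx] only retypes [B j], as [s j = i]. *)
Definition extend_blocks (B : forall j, 'M[C]_(p (s j))) i : 'M[C]_(p i) :=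
  if [pick j | s j == i] is Some j then conform_mx 0 (B j) else 0.

Lemma extend_blocksE B j : extend_blocks B (s j) = B j.
Proof.
rewrite /extend_blocks; case: pickP => [j' /eqP/s_inj-> | /(_ j)].
  by rewrite conform_mx_id.
by rewrite eqxx.
Qed.

Lemma extend_blocks_out B i : i \notin codom s -> extend_blocks B i = 0.
Proof.
rewrite /extend_blocks; case: pickP => // j /eqP <-.
by rewrite codom_f.
Qed.

Lemma ndsum_extend_blocks (S : forall i, opset R (p i)) B :
  (forall i, S i 0) -> (forall j, S (s j) (B j)) ->
  ndsum R S (mxdiag (extend_blocks B)).
Proof.
move=> S0 SB; exists (extend_blocks B); split=> // i.
by rewrite /extend_blocks; case: pickP => [j /eqP <-|_]; rewrite ?conform_mx_id.
Qed.

Lemma mulmx_adj_extend_blocks m (E1 E2 : 'M[C]_(sp, m)) B :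
  adj E1 *m mxdiag (extend_blocks B) *m E2 =
  \sum_j adj (submxcol E1 (s j)) *m B j *m submxcol E2 (s j).
Proof.
rewrite mulmx_adj_mxdiag -sumr_codom => [|i /extend_blocks_out->]; last first.
  by rewrite mulmx0 mul0mx.
by under eq_bigr do rewrite extend_blocksE.
Qed.

Lemma cohom_le_subfamily m (T : opset R m) (S : forall i, opset R (p i))
    N (E : 'I_N -> 'M[C]_(sp, m)) :
  (forall i, S i 0) -> cohomomorphism E T (ndsum R S) ->
  (forall a i, i \notin codom s -> submxcol (E a) i = 0) ->
  cohom_le R T (ndsum R (fun j => S (s j))).
Proof.
move=> S0 [sumE1 ET] E0.
exists N, (fun a => \mxcol_j submxcol (E a) (s j)); split.
  rewrite -sumE1; apply: eq_bigr => a _.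
  rewrite mulmx_adj_mxcol mulmx_adj_submxcol.
  by apply: sumr_codom => i /E0->; rewrite adj0 mul0mx.
move=> a b _ [B [SB ->]]; rewrite mulmx_adj_mxdiag.
under eq_bigr do rewrite !mxcolK.
by rewrite -mulmx_adj_extend_blocks; apply/ET/ndsum_extend_blocks.
Qed.

End Subfamily.

Arguments extend_blocks {k p k'} s B i.

Lemma cohom_block_eq0 k (n d : 'I_k -> nat) (e : forall i, rel 'I_(n i))
    m (S : opset R m) q N (E : 'I_N -> 'M[C]_(\sum_i (n i * d i), m * q)) :
  cohomomorphism E (ntens R S (ncC R q))
    (ndsum R (fun i => ntens R (ghat R (e i)) (ncC R (d i)))) ->
  forall a i, (d i < q)%N -> submxcol (E a) i = 0.
Proof.
move=> [_ ET] a i lt_dq; apply: compressions_tens1_eq0 lt_dq _ => x.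
pose single (_ : 'I_1) := i.
have single_inj : injective single by move=> j j' _; rewrite [j]ord1 [j']ord1.
have single_x : ndsum R (fun i => ntens R (ghat R (e i)) (ncC R (d i)))
    (mxdiag (extend_blocks single (fun _ => delta_mx x x *t 1%:M))).
  by apply: ndsum_extend_blocks => j; [exact: ntens0 | exact: ntens_delta].
have := ET a a _ single_x; rewrite mulmx_adj_extend_blocks // big_ord1.
by case/ntens_ncC_tens1 => M ->; exists M.
Qed.

End OperatorSystems.

Theorem lemma3p2 (R : realType) (r q : nat)
  (nH : nat) (eH : rel 'I_nH) (nG : nat -> nat) (eG : forall d : nat, rel 'I_(nG d))
  (hH : graph_simple eH)
  (hG : forall d : nat, (1 <= d <= r)%N -> graph_simple (eG d))
  (hq1 : (1 <= q)%N) (hqr : (q <= r)%N) :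
  cohom_le R (ntens R (ghat R eH) (ncC R q))
    (ndsum R (fun i : 'I_r => ntens R (ghat R (eG i.+1)) (ncC R i.+1))) ->
  cohom_le R (ntens R (ghat R eH) (ncC R q))
    (ndsum R (fun i : 'I_(r.+1 - q) => ntens R (ghat R (eG (q + i)%N)) (ncC R (q + i)%N))).
Proof.
(* With q.+1 in place of q, (s j).+1 = q.+1 + j holds by conversion, so the
   subfamily along s is literally the target family. *)
case: q hq1 hqr => // q _ _ [N [E hE]].
have s_lt (j : 'I_(r.+1 - q.+1)) : (q + j < r)%N by rewrite -ltn_subRL.
pose s j := Ordinal (s_lt j).
have s_inj : injective s by move=> j j' [/addnI/val_inj].
apply: (cohom_le_subfamily s_inj _ hE) => [i|a i not_s_i]; first exact: ntens0.
apply: (cohom_block_eq0 (n := fun i : 'I_r => nG i.+1) (d := fun i : 'I_r => i.+1)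
          (e := fun i : 'I_r => eG i.+1) hE).
rewrite ltnS ltnNge; apply: contra not_s_i => le_qi; apply/codomP.
have lt_iq_rq : (i - q < r - q)%N by rewrite ltn_sub2r // (leq_ltn_trans le_qi).
by exists (Ordinal lt_iq_rq); apply/val_inj; rewrite /= subnKC.
Qed.
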